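(* Let $\Gamma$ be a finitely generated infinite simple group, $S$ a finite generating set of $\Gamma$ (not containing the identity), and suppose $G=\mathrm{Cay}(\Gamma,S)$ is a graphical regular representation of $\Gamma$. Then every periodic vertex-coloring of $G$ is trivial. Moreover, if $S$ contains an element of order $2$, then $G$ does not have a periodic orientation.
   Context: The Cayley graph $\mathrm{Cay}(\Gamma,S)$ has vertex set $\Gamma$, with $g,h$ adjacent iff $hg^{-1}\in S\cup S^{-1}$; $\Gamma$ acts on it by right multiplication $h\mapsto hg$. It is a graphical regular representation of $\Gamma$ if these right multiplications are all of its automorphisms, i.e. $\mathrm{Aut}(G)=\Gamma$. A vertex-coloring is trivial if within each connected component all vertices get the same color. A vertex-coloring (resp. orientation) of $G$ is periodic if the subgroup of automorphisms of $G$ preserving the colors of vertices (resp. the orientation of every edge) has finitely many orbits on $V(G)$. *)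

From Stdlib Require Import List Relations.
Import ListNotations.
Set Implicit Arguments.

Record group := Group {
  carrier :> Type;
  mul : carrier -> carrier -> carrier;
  one : carrier;
  inv : carrier -> carrier;
  mulA : forall x y z, mul x (mul y z) = mul (mul x y) z;
  mul1g : forall x, mul one x = x;
  mulg1 : forall x, mul x one = x;
  mulVg : forall x, mul (inv x) x = one;
  mulgV : forall x, mul x (inv x) = one
}.

Section GroupDefs.
Context {G : group}.

Definition finite_group : Prop := exists l : list G, forall x : G, In x l.
Definition infinite_group : Prop := ~ finite_group.

Definition generates (S : list G) : Prop :=
  forall P : G -> Prop,
    P (one G) ->
    (forall s, In s S -> P s) ->
    (forall x y, P x -> P y -> P (mul G x y)) ->
    (forall x, P x -> P (inv G x)) ->
    forall x, P x.

Definition finitely_generated : Prop := exists S : list G, generates S.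

Definition normal_subgroup (N : G -> Prop) : Prop :=
  N (one G) /\
  (forall x y, N x -> N y -> N (mul G x y)) /\
  (forall x, N x -> N (inv G x)) /\
  (forall g x, N x -> N (mul G (mul G (inv G g) x) g)).

Definition simple_group : Prop :=
  (exists x : G, x <> one G) /\
  forall N, normal_subgroup N ->
    (forall x, N x -> x = one G) \/ (forall x, N x).

Definition order_two (s : G) : Prop := s <> one G /\ mul G s s = one G.

Definition cay_adj (S : list G) (g h : G) : Prop :=
  In (mul G h (inv G g)) S \/ In (inv G (mul G h (inv G g))) S.

Definition is_aut (S : list G) (f : G -> G) : Prop :=
  (exists f' : G -> G, (forall x, f' (f x) = x) /\ (forall y, f (f' y) = y)) /\
  (forall x y, cay_adj S x y <-> cay_adj S (f x) (f y)).

Definition GRR (S : list G) : Prop :=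
  forall f, is_aut S f -> exists g : G, forall h, f h = mul G h g.

Definition cay_connected (S : list G) : G -> G -> Prop :=
  clos_refl_trans G (cay_adj S).

Definition trivial_coloring (S : list G) (C : Type) (c : G -> C) : Prop :=
  forall x y, cay_connected S x y -> c x = c y.

Definition finitely_many_orbits (H : (G -> G) -> Prop) : Prop :=
  exists reps : list G, forall v : G,
    exists r, In r reps /\ exists f, H f /\ f r = v.

Definition periodic_coloring (S : list G) (C : Type) (c : G -> C) : Prop :=
  finitely_many_orbits (fun f => is_aut S f /\ forall x, c (f x) = c x).

Definition orientation (S : list G) (o : G -> G -> Prop) : Prop :=
  (forall x y, o x y -> cay_adj S x y) /\
  (forall x y, cay_adj S x y -> (o x y \/ o y x) /\ ~ (o x y /\ o y x)).

Definition periodic_orientation (S : list G) (o : G -> G -> Prop) : Prop :=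
  orientation S o /\
  finitely_many_orbits (fun f => is_aut S f /\ forall x y, o x y -> o (f x) (f y)).

End GroupDefs.

(* The automorphisms of a graphical regular representation are the right
   multiplications, so the automorphisms preserving a coloring (or an
   orientation) are the right multiplications by the elements of a subgroup H.
   Periodicity says that H has finitely many left cosets.  The left action of
   the group on these cosets has kernel the normal core of H, so the core has
   finite index; simplicity makes it trivial (impossible in an infinite group)
   or everything, hence H is the whole group.  A coloring invariant under all
   right multiplications is constant, and an orientation invariant under all of
   them would orient the edge {1, s} both ways when s is an involution of S. *)

From Stdlib Require Import List Classical ClassicalEpsilon FunctionalExtensionality.
Import ListNotations.

Section Finiteness.
Context {A : Type}.

Fixpoint lists_of_length (l : list A) (n : nat) : list (list A) :=
  match n with
  | O => [[]]
  | S n => flat_map (fun a => map (cons a) (lists_of_length l n)) l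
  end.

Lemma in_lists_of_length (l m : list A) : incl m l -> In m (lists_of_length l (length m)).
Proof.
  induction m as [|a m IH]; intro Hm; simpl.
  - left; reflexivity.
  - apply in_flat_map. exists a. split.
    + apply Hm; left; reflexivity.
    + apply in_map, IH. intros b Hb; apply Hm; right; exact Hb.
Qed.

Lemma finite_of_injective_into_list {B : Type} (phi : A -> B) (L : list B) :
  (forall x y, phi x = phi y -> x = y) -> (forall x, In (phi x) L) ->
  exists l : list A, forall x, In x l.
Proof.
  intros Hinj HL.
  assert (Hpre : forall L', exists l : list A, forall x, In (phi x) L' -> In x l).
  { induction L' as [|b L' [l Hl]].
    - exists []. intros x [].
    - destruct (classic (exists x, phi x = b)) as [[x0 Hx0]|Hnone].
      + exists (x0 :: l). intros x [Hx|Hx].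
        * left. apply Hinj. congruence.
        * right. auto.
      + exists l. intros x [Hx|Hx]; auto.
        exfalso. apply Hnone. exists x. symmetry. exact Hx. }
  destruct (Hpre L) as [l Hl]. exists l. intro x. apply Hl, HL.
Qed.

End Finiteness.

Section Subgroups.
Context {G : group}.
Local Notation "x * y" := (mul G x y).
Local Notation "1" := (one G).
Local Notation "x ^-1" := (inv G x) (at level 3).

Lemma mulKg (a b : G) : a^-1 * (a * b) = b.
Proof. rewrite mulA, mulVg, mul1g; reflexivity. Qed.

Lemma mulKVg (a b : G) : a * (a^-1 * b) = b.
Proof. rewrite mulA, mulgV, mul1g; reflexivity. Qed.

Lemma mulgK (a b : G) : (a * b) * b^-1 = a.
Proof. rewrite <- mulA, mulgV, mulg1; reflexivity. Qed.

Lemma inv_unique (x y : G) : x * y = 1 -> x^-1 = y.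
Proof. intro Hxy. rewrite <- (mulKg x y), Hxy, mulg1. reflexivity. Qed.

Lemma inv1 : 1^-1 = 1.
Proof. apply inv_unique, mul1g. Qed.

Lemma invK (x : G) : x^-1^-1 = x.
Proof. apply inv_unique, mulVg. Qed.

Lemma invM (a b : G) : (a * b)^-1 = b^-1 * a^-1.
Proof. apply inv_unique. rewrite mulA, mulgK, mulgV. reflexivity. Qed.

Record subgroup (P : G -> Prop) : Prop := {
  subgroup1 : P 1;
  subgroupM : forall a b, P a -> P b -> P (a * b);
  subgroupV : forall a, P a -> P a^-1
}.

Definition core (P : G -> Prop) (x : G) : Prop := forall y, P (y^-1 * x * y).

Definition finite_index (P : G -> Prop) : Prop :=
  exists reps : list G, forall v, exists2 r, In r reps & P (r^-1 * v).

Lemma core_sub (P : G -> Prop) (x : G) : core P x -> P x.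
Proof. intro Hx. specialize (Hx 1). rewrite inv1, mul1g, mulg1 in Hx. exact Hx. Qed.

Lemma core_normal {P : G -> Prop} : subgroup P -> normal_subgroup (core P).
Proof.
  intros [P1 PM PV]. split; [|split; [|split]].
  - intro y. rewrite mulg1, mulVg. exact P1.
  - intros a b Ha Hb y.
    replace (y^-1 * (a * b) * y) with ((y^-1 * a * y) * (y^-1 * b * y)) by
      (rewrite <- !mulA, mulKVg; reflexivity).
    auto.
  - intros a Ha y.
    replace (y^-1 * a^-1 * y) with ((y^-1 * a * y)^-1) by
      (rewrite !invM, invK, mulA; reflexivity).
    auto.
  - intros g x Hx y.
    replace (y^-1 * (g^-1 * x * g) * y) with ((g * y)^-1 * x * (g * y)) by
      (rewrite invM, !mulA; reflexivity).
    apply Hx.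
Qed.

Lemma core_of_same_cosets (P : G -> Prop) (reps : list G) (x y : G) :
  subgroup P -> (forall v, exists2 r, In r reps & P (r^-1 * v)) ->
  (forall r, In r reps -> P ((y * r)^-1 * (x * r))) -> core P (y^-1 * x).
Proof.
  intros [_ PM PV] Hreps Hsame w.
  destruct (Hreps w) as [r Hr Hh].
  set (h := r^-1 * w) in Hh.
  replace w with (r * h) by apply mulKVg.
  replace ((r * h)^-1 * (y^-1 * x) * (r * h))
    with (h^-1 * ((y * r)^-1 * (x * r)) * h)
    by (rewrite !invM, !mulA; reflexivity).
  auto.
Qed.

(* Each [x] permutes the finitely many cosets by left multiplication; the
   resulting map into lists of representatives is injective modulo the core. *)
Lemma finite_of_finite_index_trivial_core {P : G -> Prop} :
  subgroup P -> finite_index P -> (forall x, core P x -> x = 1) -> @finite_group G.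
Proof.
  intros HP [reps Hreps] Htriv.
  assert (Hrep : forall v, {r | In r reps /\ P (r^-1 * v)}).
  { intro v. apply constructive_indefinite_description.
    destruct (Hreps v) as [r Hr Hv]. exists r. split; assumption. }
  set (rep := fun v => proj1_sig (Hrep v)).
  assert (rep_in : forall v, In (rep v) reps) by (intro v; apply (proj2_sig (Hrep v))).
  assert (rep_coset : forall v, P ((rep v)^-1 * v)) by (intro v; apply (proj2_sig (Hrep v))).
  apply (finite_of_injective_into_list (fun x => map (fun r => rep (x * r)) reps)
           (lists_of_length reps (length reps))).
  - intros x y Hxy.
    assert (Hcore : core P (y^-1 * x)).
    { apply (@core_of_same_cosets P reps); try assumption.
      intros r Hr.
      assert (Hq : rep (x * r) = rep (y * r)) by exact (proj1 map_ext_in_iff Hxy r Hr).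
      replace ((y * r)^-1 * (x * r))
        with (((rep (y * r))^-1 * (y * r))^-1 * ((rep (x * r))^-1 * (x * r)))
        by (rewrite Hq, invM, invK, <- mulA, mulKVg; reflexivity).
      destruct HP as [_ PM PV]. apply PM; [apply PV|]; apply rep_coset. }
    rewrite <- (mulKVg y x), (Htriv _ Hcore), mulg1. reflexivity.
  - intro x. rewrite <- (length_map (fun r => rep (x * r)) reps).
    apply in_lists_of_length. intros a Ha.
    apply in_map_iff in Ha. destruct Ha as [r [<- _]]. apply rep_in.
Qed.

Lemma subgroup_finite_index_full {P : G -> Prop} :
  @infinite_group G -> @simple_group G -> subgroup P -> finite_index P -> forall g, P g.
Proof.
  intros Hinf [_ Hsimple] HP Hindex g.
  destruct (Hsimple _ (core_normal HP)) as [Htriv|Hall].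
  - exfalso. exact (Hinf (finite_of_finite_index_trivial_core HP Hindex Htriv)).
  - apply core_sub, Hall.
Qed.

Lemma cay_adj_rmul {S : list G} {x y : G} (g : G) :
  cay_adj S x y -> cay_adj S (x * g) (y * g).
Proof. unfold cay_adj. rewrite (invM x g), mulA, mulgK. auto. Qed.

Lemma GRR_finite_index {S : list G} {Q : (G -> G) -> Prop} :
  GRR S -> finitely_many_orbits (fun f => is_aut S f /\ Q f) ->
  finite_index (fun g => Q (fun h => h * g)).
Proof.
  intros Hgrr [reps Hreps]. exists reps. intro v.
  destruct (Hreps v) as [r [Hr [f [[Hf HQ] Hfr]]]].
  destruct (Hgrr f Hf) as [g Hg].
  assert (Hfg : f = fun h => h * g) by (apply functional_extensionality; exact Hg).
  subst f. exists r; [exact Hr|]. rewrite <- Hfr, mulKg. exact HQ.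
Qed.

Lemma rinvariant_of_periodic {S : list G} {Q : (G -> G) -> Prop} :
  @infinite_group G -> @simple_group G -> GRR S ->
  subgroup (fun g => Q (fun h => h * g)) ->
  finitely_many_orbits (fun f => is_aut S f /\ Q f) ->
  forall g, Q (fun h => h * g).
Proof.
  intros Hinf Hsimple Hgrr HQ Hper.
  exact (subgroup_finite_index_full Hinf Hsimple HQ (GRR_finite_index Hgrr Hper)).
Qed.

Lemma rinvariant_coloring_subgroup {C : Type} (c : G -> C) :
  subgroup (fun g => forall x, c (x * g) = c x).
Proof.
  split.
  - intro x. rewrite mulg1. reflexivity.
  - intros a b Ha Hb x. rewrite mulA, Hb, Ha. reflexivity.
  - intros a Ha x. rewrite <- (Ha (x * a^-1)), <- mulA, mulVg, mulg1. reflexivity.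
Qed.

(* For the inverse: [x a^-1 -> y a^-1] is an edge, and orienting it the other
   way would, after multiplying by [a], reverse the edge [x -> y]. *)
Lemma rinvariant_orientation_subgroup {S : list G} {o : G -> G -> Prop} :
  orientation S o -> subgroup (fun g => forall x y, o x y -> o (x * g) (y * g)).
Proof.
  intros [Hedge Hone]. split.
  - intros x y Hxy. rewrite !mulg1. exact Hxy.
  - intros a b Ha Hb x y Hxy. rewrite !mulA. auto.
  - intros a Ha x y Hxy.
    destruct (Hone _ _ (cay_adj_rmul a^-1 (Hedge x y Hxy))) as [[Hfwd|Hbwd] _];
      [exact Hfwd|].
    exfalso. apply (proj2 (Hone x y (Hedge x y Hxy))). split; [exact Hxy|].
    specialize (Ha _ _ Hbwd). rewrite <- !mulA, !mulVg, !mulg1 in Ha. exact Ha.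
Qed.

Lemma no_rinvariant_orientation_with_involution {S : list G} {o : G -> G -> Prop} {s : G} :
  orientation S o -> (forall g x y, o x y -> o (x * g) (y * g)) ->
  In s S -> s * s = 1 -> False.
Proof.
  intros [_ Hone] Hinv Hs Hss.
  assert (Hadj : cay_adj S 1 s) by (left; rewrite inv1, mulg1; exact Hs).
  assert (Hflip : forall x y, o x y -> x * s = y -> y * s = x -> o y x).
  { intros x y Hxy Hx Hy. specialize (Hinv s _ _ Hxy). rewrite Hx, Hy in Hinv. exact Hinv. }
  destruct (Hone _ _ Hadj) as [[H1s|Hs1] Hasym]; apply Hasym; split; auto.
  - apply Hflip; [exact H1s|apply mul1g|exact Hss].
  - apply Hflip; [exact Hs1|exact Hss|apply mul1g].
Qed.

End Subgroups.

Theorem lemma3p2 (G : group) (S : list G) :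
  @finitely_generated G -> @infinite_group G -> @simple_group G ->
  generates S -> ~ In (one G) S -> GRR S ->
  (forall (C : Type) (c : G -> C), periodic_coloring S c -> trivial_coloring S c) /\
  ((exists s, In s S /\ order_two s) ->
     ~ exists o : G -> G -> Prop, periodic_orientation S o).
Proof.
  intros _ Hinf Hsimple _ _ Hgrr. split.
  - intros C c Hper x y _.
    assert (Hrinv : forall g x, c (mul G x g) = c x)
      by exact (rinvariant_of_periodic (Q := fun f => forall x, c (f x) = c x)
                  Hinf Hsimple Hgrr (rinvariant_coloring_subgroup c) Hper).
    rewrite <- (mul1g G x), <- (mul1g G y), !Hrinv. reflexivity.
  - intros [s [Hs [_ Hss]]] [o [Ho Hper]].
    refine (no_rinvariant_orientation_with_involution Ho _ Hs Hss).
    exact (rinvariant_of_periodic (Q := fun f => forall x y, o x y -> o (f x) (f y))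
             Hinf Hsimple Hgrr (rinvariant_orientation_subgroup Ho) Hper).
Qed.
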